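(* Let $R$ be a finite set of attributes. Consider formal expressions (dependencies) of the form $X \rightarrow Y$ with $X, Y \subseteq R$, where juxtaposition of attribute sets denotes union (e.g. $XZ = X \cup Z$). Consider the following two systems of inference rules on such expressions. System O: (O1) Identity: for all $X \subseteq R$, infer $X \rightarrow X$. (O2) Decomposition: from $X \rightarrow Y$ and $Z \subseteq Y$, infer $X \rightarrow Z$. (O3) Composition: from $X \rightarrow Y$ and $Z \rightarrow W$, infer $XZ \rightarrow YW$. System N: (N1) Reflexivity: for all $Y \subseteq X \subseteq R$, infer $X \rightarrow Y$. (N2) Append: from $X \rightarrow Y$ and $Z \subseteq W$, infer $XW \rightarrow YZ$. (N3) Union: from $X \rightarrow Y$ and $X \rightarrow Z$, infer $X \rightarrow YZ$. (N4) Simplification: from $X \rightarrow YZ$, infer $X \rightarrow Y$ and $X \rightarrow Z$. Then the two systems are equivalent: every rule of System O is derivable using the rules of System N, and every rule of System N is derivable using the rules of System O. Consequently, for every set $\Sigma$ of such expressions and every expression $X \rightarrow Y$, $X \rightarrow Y$ is derivable from $\Sigma$ using System O if and only if it is derivable from $\Sigma$ using System N.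
   Context: System O is the axiom system the paper gives for Ontology Functional Dependencies (OFDs); System N is the axiom system for Null Functional Dependencies (NFDs), i.e. functional dependencies over relations with nulls. The statement concerns only syntactic derivability with these rules; $X, Y, Z, W$ range over subsets of $R$. *)

(* Attributes: a finite type A; the attribute set R is the
   whole of A, so subsets of R are elements of {set A}. *)
From mathcomp Require Import all_boot.
Set Implicit Arguments. Unset Strict Implicit. Unset Printing Implicit Defensive.

Definition dep (A : finType) := ({set A} * {set A})%type.

Inductive derO (A : finType) (Sigma : dep A -> Prop) : {set A} -> {set A} -> Prop :=
| O_hyp (X Y : {set A}) : Sigma (X, Y) -> derO Sigma X Y
| O1_identity (X : {set A}) : derO Sigma X X
| O2_decomposition (X Y Z : {set A}) : derO Sigma X Y -> Z \subset Y -> derO Sigma X Z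
| O3_composition (X Y Z W : {set A}) :
    derO Sigma X Y -> derO Sigma Z W -> derO Sigma (X :|: Z) (Y :|: W).

Inductive derN (A : finType) (Sigma : dep A -> Prop) : {set A} -> {set A} -> Prop :=
| N_hyp (X Y : {set A}) : Sigma (X, Y) -> derN Sigma X Y
| N1_reflexivity (X Y : {set A}) : Y \subset X -> derN Sigma X Y
| N2_append (X Y Z W : {set A}) : derN Sigma X Y -> Z \subset W -> derN Sigma (X :|: W) (Y :|: Z)
| N3_union (X Y Z : {set A}) : derN Sigma X Y -> derN Sigma X Z -> derN Sigma X (Y :|: Z)
| N4_simpl_l (X Y Z : {set A}) : derN Sigma X (Y :|: Z) -> derN Sigma X Y
| N4_simpl_r (X Y Z : {set A}) : derN Sigma X (Y :|: Z) -> derN Sigma X Z.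

(* Premise sets of rules: no premise, one premise, two premises. *)
Definition prem0 (A : finType) : dep A -> Prop := fun _ => False.
Definition prem1 (A : finType) (X Y : {set A}) : dep A -> Prop :=
  fun d => d = (X, Y).
Definition prem2 (A : finType) (X Y Z W : {set A}) : dep A -> Prop :=
  fun d => d = (X, Y) \/ d = (Z, W).

From mathcomp Require Import all_boot.

Section DerivedRules.
Variables (A : finType) (Sigma : dep A -> Prop).
Implicit Types X Y Z W : {set A}.

Lemma derN_id X : derN Sigma X X.
Proof. exact: N1_reflexivity. Qed.

Lemma derN_weakr X Y Z : derN Sigma X Y -> Z \subset Y -> derN Sigma X Z.
Proof. by move=> dXY /setUidPr defY; apply: (@N4_simpl_l _ _ _ _ Y); rewrite defY. Qed.

(* Appending the empty set pads the left-hand sides to X :|: Z; N3 then merges. *)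
Lemma derN_compose X Y Z W :
  derN Sigma X Y -> derN Sigma Z W -> derN Sigma (X :|: Z) (Y :|: W).
Proof.
move=> dXY dZW.
have dXZ_Y := N2_append dXY (sub0set Z); rewrite setU0 in dXZ_Y.
have dXZ_W := N2_append dZW (sub0set X); rewrite setU0 setUC in dXZ_W.
exact: N3_union.
Qed.

Lemma derO_refl X Y : Y \subset X -> derO Sigma X Y.
Proof. exact/O2_decomposition/O1_identity. Qed.

Lemma derO_append X Y Z W :
  derO Sigma X Y -> Z \subset W -> derO Sigma (X :|: W) (Y :|: Z).
Proof. by move=> dXY /derO_refl; apply: O3_composition. Qed.

Lemma derO_union X Y Z : derO Sigma X Y -> derO Sigma X Z -> derO Sigma X (Y :|: Z).
Proof. by move=> dXY dXZ; rewrite -[X]setUid; apply: O3_composition. Qed.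

Lemma derO_simpll X Y Z : derO Sigma X (Y :|: Z) -> derO Sigma X Y.
Proof. by move/O2_decomposition; apply; apply: subsetUl. Qed.

Lemma derO_simplr X Y Z : derO Sigma X (Y :|: Z) -> derO Sigma X Z.
Proof. by move/O2_decomposition; apply; apply: subsetUr. Qed.

Lemma derO_derN X Y : derO Sigma X Y -> derN Sigma X Y.
Proof.
elim=> {X Y} [X Y|X|X Y Z _ dXY|X Y Z W _ dXY _ dZW].
- exact: N_hyp.
- exact: derN_id.
- exact: derN_weakr dXY.
- exact: derN_compose.
Qed.

Lemma derN_derO X Y : derN Sigma X Y -> derO Sigma X Y.
Proof.
elim=> {X Y} [X Y|X Y|X Y Z W _ dXY|X Y Z _ dXY _ dXZ|X Y Z _ dXYZ|X Y Z _ dXYZ].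
- exact: O_hyp.
- exact: derO_refl.
- exact: derO_append dXY.
- exact: derO_union.
- exact: derO_simpll dXYZ.
- exact: derO_simplr dXYZ.
Qed.

End DerivedRules.

Theorem theorem3p6 (A : finType) :
  (* every rule of System O is derivable in System N *)
  ((forall X : {set A}, derN (@prem0 A) X X) /\
   (forall X Y Z : {set A}, Z \subset Y -> derN (prem1 X Y) X Z) /\
   (forall X Y Z W : {set A}, derN (prem2 X Y Z W) (X :|: Z) (Y :|: W))) /\
  (* every rule of System N is derivable in System O *)
  ((forall X Y : {set A}, Y \subset X -> derO (@prem0 A) X Y) /\
   (forall X Y Z W : {set A}, Z \subset W -> derO (prem1 X Y) (X :|: W) (Y :|: Z)) /\
   (forall X Y Z : {set A}, derO (prem2 X Y X Z) X (Y :|: Z)) /\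
   (forall X Y Z : {set A}, derO (prem1 X (Y :|: Z)) X Y /\ derO (prem1 X (Y :|: Z)) X Z)) /\
  (* consequence: same derivable dependencies from any Sigma *)
  (forall (Sigma : dep A -> Prop) (X Y : {set A}), derO Sigma X Y <-> derN Sigma X Y).
Proof.
split; [split; [|split]|split; [split; [|split; [|split]]|]].
- exact: derN_id.
- by move=> X Y Z; apply/derN_weakr/N_hyp.
- by move=> X Y Z W; apply: derN_compose; apply: N_hyp; [left|right].
- exact: derO_refl.
- by move=> X Y Z W; apply/derO_append/O_hyp.
- by move=> X Y Z; apply: derO_union; apply: O_hyp; [left|right].
- by move=> X Y Z; split; [apply: derO_simpll|apply: derO_simplr]; apply: O_hyp.
- by move=> Sigma X Y; split; [apply: derO_derN|apply: derN_derO].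
Qed.
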